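(* Consider the two matrix ODEs \[ \text{(A)}\quad \dot E=-G_\varepsilon(E)+\langle G_\varepsilon(E),E\rangle E, \] \[ \text{(B)}\quad \dot Y=-P_YR_\varepsilon(E)+\langle P_YR_\varepsilon(E),E\rangle Y,\qquad E=\Pi_{\mathcal{S}}Y . \] 1. Let $E_\star\in\mathcal{E}_1$ be a stationary point of (A). Assume that $\lambda_k$ and $\lambda_{k+1}$ of $L(W+\varepsilon E_\star)$ are simple, that $G_\varepsilon(E_\star)\neq0$, and that $R_\varepsilon(E_\star)$ has rank $4$. Then there is a symmetric matrix $Y_\star\in\mathcal{M}_4$ with $E_\star=\Pi_{\mathcal{S}}Y_\star$ that is a stationary point of (B). 2. Conversely, let $Y_\star\in\mathcal{M}_4$ be a symmetric stationary point of (B), and set $E_\star=\Pi_{\mathcal{S}}Y_\star$ and $R_\star=R_\varepsilon(E_\star)$. Assume that $\|E_\star\|_F=1$, that $\lambda_k$ and $\lambda_{k+1}$ of $L(W+\varepsilon E_\star)$ are simple, that $R_\star$ has rank $4$, and that $P_{Y_\star}R_\star\neq0$. Then: - $P_{Y_\star}R_\star=R_\star$; - $Y_\star$ is a nonzero real multiple of $R_\star$; - $E_\star$ is a stationary point of (A).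
   Context: A stationary point of an ODE $\dot X=f(X)$ is a point where $f(X)=0$. Let $\mathscr{E}\subseteq\{1,\dots,n\}^2$ be a symmetric edge set, and let $W\in\mathbb{R}^{n\times n}$ be symmetric, entrywise non-negative, with $w_{ij}=0$ for $(i,j)\notin\mathscr{E}$. Let $L(A)=\mathrm{diag}(A\mathbb{1})-A$ with $\mathbb{1}=(1,\dots,1)^T$. Eigenvalues are ordered $\lambda_1\le\dots\le\lambda_n$. The inner product is $\langle X,Y\rangle=\mathrm{trace}(X^TY)$ and $\|\cdot\|_F$ is the Frobenius norm. Let $\mathcal{S}=\{A: a_{ij}=0\ \forall (i,j)\notin\mathscr{E}\}$, with orthogonal projection $\Pi_{\mathcal{S}}$ (zeroing the entries outside $\mathscr{E}$). Let $\mathcal{E}=\mathcal{S}\cap\mathrm{Sym}(\mathbb{R}^{n\times n})$ and $\mathcal{E}_1=\{E\in\mathcal{E}:\|E\|_F=1\}$. Fix $k\in\{2,\dots,n-1\}$ and $\varepsilon>0$. For $E\in\mathcal{E}$ with $\lambda_k,\lambda_{k+1}$ of $L(W+\varepsilon E)$ simple, define the following objects. - $x$ and $y$ are unit eigenvectors for $\lambda_{k+1}$ and $\lambda_k$ respectively. - $z=x\bullet x-y\bullet y$, the componentwise product. - $R_\varepsilon(E)=\tfrac12(z\mathbb{1}^T+\mathbb{1}z^T)-xx^T+yy^T$. - $G_\varepsilon(E)=\Pi_{\mathcal{S}}R_\varepsilon(E)$. $\mathcal{M}_4$ is the manifold of real $n\times n$ matrices of rank exactly 4. $P_Y$ is the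 orthogonal projection onto $T_Y\mathcal{M}_4$. For symmetric $Y=USU^T$, with $U\in\mathbb{R}^{n\times4}$ having orthonormal columns and $S$ symmetric invertible, it is $P_YA=A-(I_n-UU^T)A(I_n-UU^T)$. *)

From HB Require Import structures.
From mathcomp Require Import all_boot all_order all_algebra reals.
From Stdlib Require Import ClassicalEpsilon.
Set Implicit Arguments.
Unset Strict Implicit.
Unset Printing Implicit Defensive.
Import Order.TTheory GRing.Theory Num.Theory.
Local Open Scope ring_scope.

Section Defs.
Variables (R : realType) (n : nat).

Definition frob_inner (X Y : 'M[R]_n) : R := \tr (X^T *m Y).
Definition frob_norm (X : 'M[R]_n) : R := Num.sqrt (frob_inner X X).

Definition laplacian (A : 'M[R]_n) : 'M[R]_n :=
  \matrix_(i, j) ((i == j)%:R * (\sum_l A i l)) - A.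

Definition PiS (Ed : {set 'I_n * 'I_n}) (A : 'M[R]_n) : 'M[R]_n :=
  \matrix_(i, j) (if (i, j) \in Ed then A i j else 0).

Definition in_calE (Ed : {set 'I_n * 'I_n}) (E : 'M[R]_n) : Prop :=
  E^T = E /\ (forall i j, (i, j) \notin Ed -> E i j = 0).
Definition in_calE1 (Ed : {set 'I_n * 'I_n}) (E : 'M[R]_n) : Prop :=
  in_calE Ed E /\ frob_norm E = 1.

Definition is_sorted_spectrum (A : 'M[R]_n) (s : seq R) : Prop :=
  sorted <=%R s /\ char_poly A = \prod_(a <- s) ('X - a%:P).

(* The sorted eigenvalue list (exists and is unique for symmetric A). *)
Definition spectrum (A : 'M[R]_n) : seq R :=
  epsilon (inhabits [::]) (is_sorted_spectrum A).

(* lambda_j(A), 1-indexed: lambda_1 <= ... <= lambda_n. *)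
Definition eigval (A : 'M[R]_n) (j : nat) : R := (spectrum A)`_(j.-1).

Definition simple_eig (A : 'M[R]_n) (j : nat) : Prop :=
  count_mem (eigval A j) (spectrum A) = 1%N.

Definition unit_eigvec (A : 'M[R]_n) (a : R) : 'cV[R]_n :=
  epsilon (inhabits 0)
    (fun v : 'cV[R]_n => A *m v = a *: v /\ \sum_i v i 0 ^+ 2 = 1).

Variables (W : 'M[R]_n) (eps : R) (k : nat).

Definition Reps (E : 'M[R]_n) : 'M[R]_n :=
  let A := laplacian (W + eps *: E) in
  let x := unit_eigvec A (eigval A k.+1) in
  let y := unit_eigvec A (eigval A k) in
  let z := fun i => x i 0 ^+ 2 - y i 0 ^+ 2 in
  \matrix_(i, j) ((z i + z j) / 2) - x *m x^T + y *m y^T.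

Definition Geps (Ed : {set 'I_n * 'I_n}) (E : 'M[R]_n) : 'M[R]_n :=
  PiS Ed (Reps E).

(* Projection onto the tangent space T_Y M_4 for symmetric Y = U S U^T. *)
Definition tan_factor (Y : 'M[R]_n) : 'M[R]_(n, 4) :=
  epsilon (inhabits 0)
    (fun U : 'M[R]_(n, 4) => U^T *m U = 1%:M /\
       exists S : 'M[R]_4, S^T = S /\ S \in unitmx /\ Y = U *m S *m U^T).

Definition PY (Y A : 'M[R]_n) : 'M[R]_n :=
  let U := tan_factor Y in
  A - (1%:M - U *m U^T) *m A *m (1%:M - U *m U^T).

Definition fieldA (Ed : {set 'I_n * 'I_n}) (E : 'M[R]_n) : 'M[R]_n :=
  - Geps Ed E + frob_inner (Geps Ed E) E *: E.

Definition fieldB (Ed : {set 'I_n * 'I_n}) (Y : 'M[R]_n) : 'M[R]_n :=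
  let E := PiS Ed Y in
  - PY Y (Reps E) + frob_inner (PY Y (Reps E)) E *: Y.

Definition stationaryA (Ed : {set 'I_n * 'I_n}) (E : 'M[R]_n) : Prop :=
  fieldA Ed E = 0.
Definition stationaryB (Ed : {set 'I_n * 'I_n}) (Y : 'M[R]_n) : Prop :=
  fieldB Ed Y = 0.

End Defs.

(* Write R := R_eps(E), G := Pi_S R, and Q := I - U U^T for a symmetric
   rank-4 matrix Y = U S U^T, so that P_Y A = A - Q A Q, Q is idempotent and
   Q Y = Y Q = 0.  Stationarity of (A) says G = <G,E> E, stationarity of (B)
   says P_Y R = <P_Y R, E> Y.
   (1) From a stationary E of (A) with a := <G,E> <> 0, take Y := a^-1 R:
       it is symmetric of rank 4, Pi_S Y = a^-1 G = E, and since Q R = 0 the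
       projection fixes R, so (B) vanishes at Y.
   (2) From a stationary Y of (B), P := P_Y R is a nonzero multiple of Y, so
       Q P = P Q = 0; a projection whose image has full rank 4 = rank R is
       the identity on R (lemma [compl_proj_full_rank]), so P = R, Y is a
       multiple of R and E = Pi_S Y is the matching multiple of G. *)
From HB Require Import structures.
From mathcomp Require Import all_boot all_order all_algebra reals.
From Stdlib Require Import ClassicalEpsilon.
Import Order.TTheory GRing.Theory Num.Theory.
Local Open Scope ring_scope.
Set Implicit Arguments.
Unset Strict Implicit.

Section GramSchmidt.
Variables (F : rcfType) (n : nat).

Lemma row_sqnorm_gt0 (w : 'rV[F]_n) : w != 0 -> 0 < (w *m w^T) 0 0.
Proof.
move=> wn0; have -> : (w *m w^T) 0 0 = \sum_j w 0 j ^+ 2.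
  by rewrite !mxE; apply: eq_bigr => j _; rewrite !mxE expr2.
rewrite lt_def sumr_ge0 ?andbT => [|j _]; last exact: sqr_ge0.
apply: contra wn0 => /eqP/psumr_eq0P sum0; apply/eqP/matrixP => i j.
rewrite (ord1 i) [RHS]mxE; apply/eqP; rewrite -sqrf_eq0; apply/eqP.
by apply: sum0 => // l _; exact: sqr_ge0.
Qed.

Lemma orthonormal_extend r (a : 'rV[F]_n) (B1 : 'M[F]_(r, n)) :
  B1 *m B1^T = 1%:M ->
  exists r' (B : 'M[F]_(r', n)), B *m B^T = 1%:M /\ (B == a + B1)%MS.
Proof.
move=> B1on; pose w := a - a *m B1^T *m B1.
have a_dec : a = w + a *m B1^T *m B1 by rewrite subrK.
have B1w : B1 *m w^T = 0.
  by rewrite linearB /= !trmx_mul trmxK mulmxBr !mulmxA B1on mul1mx subrr.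
have proj_sub : (a *m B1^T *m B1 <= a + B1)%MS.
  exact: submx_trans (submxMl _ _) (addsmxSr _ _).
have [w0|wn0] := eqVneq w 0.
  exists r, B1; split => //; rewrite /eqmx addsmxSr addsmx_sub submx_refl andbT.
  by rewrite a_dec w0 add0r submxMl.
pose s := Num.sqrt ((w *m w^T) 0 0).
have s0 : s != 0 by rewrite sqrtr_eq0 -ltNge row_sqnorm_gt0.
pose b := s^-1 *: w.
have B1b : B1 *m b^T = 0 by rewrite linearZ /= -scalemxAr B1w scaler0.
exists (1 + r)%N, (col_mx b B1); split.
  rewrite tr_col_mx mul_col_row B1on B1b (scalar_mx_block 1 r).
  have -> : b *m B1^T = 0 by rewrite -[b *m _]trmxK trmx_mul trmxK B1b linear0.
  congr block_mx; apply/matrixP => i j; rewrite (ord1 i) (ord1 j) /b.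
  rewrite linearZ /= -scalemxAr -scalemxAl scalerA mxE [RHS]mxE /=.
  by rewrite -invfM -expr2 sqr_sqrtr ?mulVf ?gt_eqF ?ltW ?row_sqnorm_gt0.
have /andP[bC B1C] : (b <= col_mx b B1)%MS && (B1 <= col_mx b B1)%MS.
  by rewrite -col_mx_sub submx_refl.
rewrite /eqmx col_mx_sub addsmx_sub B1C addsmxSr /= !andbT; apply/andP; split.
  by rewrite scalemx_sub // addmx_sub ?addsmxSl // -scaleN1r scalemx_sub.
have -> : a = s *: b + a *m B1^T *m B1.
  by rewrite /b scalerA mulfV // scale1r subrK.
apply: addmx_sub; first exact: scalemx_sub bC.
exact: submx_trans (submxMl _ _) B1C.
Qed.

Lemma orthonormal_basis m (A : 'M[F]_(m, n)) :
  exists r (B : 'M[F]_(r, n)), B *m B^T = 1%:M /\ (B == A)%MS.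
Proof.
elim: m A => [|m IH] A.
  exists 0%N, 0; split; first by apply/matrixP => [[]].
  by rewrite (flatmx0 A) /eqmx !sub0mx.
have [r [B1 [B1on /eqmxP eB1]]] := IH (dsubmx (A : 'M_(1 + m, n))).
have [r' [B [Bon /eqmxP eB]]] :=
  orthonormal_extend (usubmx (A : 'M_(1 + m, n))) B1on.
exists r', B; split => //; apply/eqmxP.
apply: eqmx_trans eB (eqmx_trans (adds_eqmx (eqmx_refl _) eB1) _).
by apply: eqmx_trans (addsmxE _ _) _; rewrite vsubmxK.
Qed.

(* A symmetric matrix of rank r factors as U S U^T with U^T U = I_r and
   S symmetric invertible; this is the existence claim behind [tan_factor]. *)
Lemma sym_orthonormal_factor r (Y : 'M[F]_n) : Y^T = Y -> \rank Y = r ->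
  exists U : 'M[F]_(n, r), U^T *m U = 1%:M /\
    exists S : 'M[F]_r, S^T = S /\ S \in unitmx /\ Y = U *m S *m U^T.
Proof.
move=> Ysym Yrank; have [r' [B [Bon eBY]]] := orthonormal_basis Y.
have rB : \rank B = r'.
  apply/eqP; rewrite eqn_leq rank_leq_row /=.
  by rewrite -{1}(mxrank1 F r') -Bon mxrankM_maxl.
have r'r : r' = r by rewrite -Yrank -(eqmx_rank eBY) rB.
subst r'.
have YBB : Y *m B^T *m B = Y.
  have /andP[_ sYB] := eBY.
  have := mulmxKpV sYB; move: (Y *m pinvmx B) => X <-.
  by rewrite -(mulmxA X B) Bon mulmx1.
have BBY : B^T *m B *m Y = Y.
  by rewrite -{2}Ysym -{2}YBB !trmx_mul trmxK Ysym mulmxA.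
have Yfac : Y = B^T *m (B *m Y *m B^T) *m B by rewrite !mulmxA BBY YBB.
exists B^T; rewrite trmxK; split => //.
exists (B *m Y *m B^T); split; last split.
- by rewrite !trmx_mul trmxK Ysym mulmxA.
- rewrite -row_free_unit /row_free; apply/eqP/anti_leq.
  rewrite rank_leq_row /= -[X in (X <= _)%N]Yrank {1}Yfac.
  exact: leq_trans (mxrankM_maxl _ _) (mxrankM_maxr _ _).
- exact: Yfac.
Qed.

End GramSchmidt.

Section ComplementProjection.
Variables (F : fieldType) (n : nat) (Q : 'M[F]_n).

Lemma compl_proj_fixed (A : 'M[F]_n) : Q *m A = 0 -> A - Q *m A *m Q = A.
Proof. by move=> QA; rewrite QA mul0mx subr0. Qed.

(* For an idempotent Q, if P := A - Q A Q is annihilated by Q on both sides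
   and has the rank of A, then P = A: Q P = 0 gives P = (I - Q) A, so the
   row space of P lies in that of A, hence equals it, and then P Q = 0
   forces A Q = 0. *)
Lemma compl_proj_full_rank (A : 'M[F]_n) : Q *m Q = Q ->
  let P := A - Q *m A *m Q in
  Q *m P = 0 -> P *m Q = 0 -> \rank P = \rank A -> P = A.
Proof.
move=> QQ P QP PQ rankP.
have QAQ : Q *m A = Q *m A *m Q.
  by move: QP; rewrite mulmxBr !mulmxA QQ => /eqP; rewrite subr_eq0 => /eqP.
have sPA : (P <= A)%MS by rewrite /P -QAQ -{1}[A]mul1mx -mulmxBl submxMl.
have /andP[_ sAP] : (P == A)%MS by rewrite -(mxrank_leqif_eq sPA).2 rankP.
have AQ : A *m Q = 0.
  have := mulmxKpV sAP; move: (A *m pinvmx P) => X <-.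
  by rewrite -mulmxA PQ mulmx0.
by rewrite /P -mulmxA AQ mulmx0 subr0.
Qed.

End ComplementProjection.

Section ModelFacts.
Variables (R : realType) (n : nat).

Definition tan_compl (Y : 'M[R]_n) : 'M[R]_n :=
  1%:M - tan_factor Y *m (tan_factor Y)^T.

Lemma PYE (Y A : 'M[R]_n) : PY Y A = A - tan_compl Y *m A *m tan_compl Y.
Proof. by []. Qed.

Lemma tan_compl_spec (Y : 'M[R]_n) : Y^T = Y -> \rank Y = 4%N ->
  let Q := tan_compl Y in
  [/\ Q *m Q = Q, Q *m Y = 0 & Y *m Q = 0].
Proof.
move=> Ysym Yrank Q.
have [UU [S [_ [_ Yfac]]]] := epsilon_spec (inhabits 0) _
  (sym_orthonormal_factor Ysym Yrank).
rewrite -/(tan_factor Y) in UU Yfac; rewrite /Q /tan_compl.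
move: (tan_factor Y) UU Yfac => U UU ->; split.
- rewrite mulmxBl mul1mx mulmxBr mulmx1 -mulmxA (mulmxA U^T) UU mul1mx.
  by rewrite subrr subr0.
- by rewrite mulmxBl mul1mx !mulmxA -(mulmxA U U^T) UU mulmx1 subrr.
- by rewrite mulmxBr mulmx1 -!mulmxA (mulmxA U^T) UU mul1mx subrr.
Qed.

Lemma PiS_scale (Ed : {set 'I_n * 'I_n}) (c : R) (A : 'M[R]_n) :
  PiS Ed (c *: A) = c *: PiS Ed A.
Proof. by apply/matrixP => i j; rewrite !mxE; case: ifP; rewrite ?mulr0. Qed.

Lemma PiS_id (Ed : {set 'I_n * 'I_n}) (E : 'M[R]_n) :
  (forall i j, (i, j) \notin Ed -> E i j = 0) -> PiS Ed E = E.
Proof.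
by move=> Esupp; apply/matrixP => i j; rewrite mxE; case: ifPn => // /Esupp ->.
Qed.

Lemma frob_PiS (Ed : {set 'I_n * 'I_n}) (A B : 'M[R]_n) :
  frob_inner (PiS Ed A) (PiS Ed B) = frob_inner A (PiS Ed B).
Proof.
rewrite /frob_inner /mxtrace; apply: eq_bigr => i _; rewrite !mxE.
by apply: eq_bigr => j _; rewrite !mxE; case: ifP => _ //; rewrite !mulr0.
Qed.

Lemma Reps_sym (W : 'M[R]_n) (eps : R) (k : nat) (E : 'M[R]_n) :
  (Reps W eps k E)^T = Reps W eps k E.
Proof.
rewrite /Reps /= !linearD !linearN /= !trmx_mul !trmxK; congr (_ - _ + _).
by apply/matrixP => i j; rewrite !mxE addrC.
Qed.

End ModelFacts.

Section Correspondence.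
Variables (R : realType) (n : nat) (W : 'M[R]_n) (eps : R) (k : nat).
Variable Ed : {set 'I_n * 'I_n}.

Lemma stationaryAP (E : 'M[R]_n) : stationaryA W eps k Ed E <->
  Geps W eps k Ed E = frob_inner (Geps W eps k Ed E) E *: E.
Proof.
rewrite /stationaryA /fieldA addrC; split => [/eqP | stat].
  by rewrite subr_eq0 => /eqP.
by rewrite -stat subrr.
Qed.

Lemma stationaryBP (Y : 'M[R]_n) : let E := PiS Ed Y in
  stationaryB W eps k Ed Y <->
  PY Y (Reps W eps k E) = frob_inner (PY Y (Reps W eps k E)) E *: Y.
Proof.
rewrite /stationaryB /fieldB /= addrC; split => [/eqP | stat].
  by rewrite subr_eq0 => /eqP.
by rewrite -stat subrr.
Qed.

Lemma stationaryA_lift (Es : 'M[R]_n) :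
  (forall i j, (i, j) \notin Ed -> Es i j = 0) -> stationaryA W eps k Ed Es ->
  Geps W eps k Ed Es != 0 -> \rank (Reps W eps k Es) = 4%N ->
  exists Ys : 'M[R]_n,
    [/\ Ys^T = Ys, \rank Ys = 4%N, Es = PiS Ed Ys & stationaryB W eps k Ed Ys].
Proof.
move=> Esupp /stationaryAP GE G0 Rrank.
set G := Geps W eps k Ed Es in GE G0; set a := frob_inner G Es in GE.
set Rs := Reps W eps k Es in Rrank.
have a0 : a != 0 by apply: contraNneq G0 => a0; rewrite GE a0 scale0r.
pose Ys := a^-1 *: Rs.
have RY : Rs = a *: Ys by rewrite /Ys scalerA mulfV // scale1r.
have YsT : Ys^T = Ys by rewrite /Ys linearZ /= Reps_sym.
have Yrank : \rank Ys = 4%N by rewrite mxrank_scale_nz ?invr_eq0.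
have EY : PiS Ed Ys = Es.
  by rewrite PiS_scale -[PiS Ed Rs]/G GE scalerA mulVf // scale1r.
exists Ys; split => //; apply/stationaryBP; rewrite /= EY -/Rs.
have [_ QY _] := tan_compl_spec YsT Yrank.
have PR : PY Ys Rs = Rs.
  by rewrite PYE compl_proj_fixed // RY -scalemxAr QY scaler0.
have aR : frob_inner Rs Es = a.
  by rewrite /a /G /Geps -{3}(PiS_id Esupp) frob_PiS PiS_id.
by rewrite PR aR.
Qed.

Lemma stationaryB_descend (Ys : 'M[R]_n) :
  Ys^T = Ys -> \rank Ys = 4%N -> stationaryB W eps k Ed Ys ->
  let Es := PiS Ed Ys in
  let Rs := Reps W eps k Es in
  \rank Rs = 4%N -> PY Ys Rs != 0 ->
  [/\ PY Ys Rs = Rs,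
      exists c : R, c != 0 /\ Ys = c *: Rs
    & stationaryA W eps k Ed Es].
Proof.
move=> YsT Yrank /stationaryBP PbY Es Rs Rrank P0.
rewrite -/Es -/Rs in PbY.
set b := frob_inner (PY Ys Rs) Es in PbY.
have b0 : b != 0 by apply: contraNneq P0 => b0; rewrite PbY b0 scale0r.
have [QQ QY YQ] := tan_compl_spec YsT Yrank.
have PR : PY Ys Rs = Rs.
  apply: (compl_proj_full_rank QQ); rewrite -PYE.
  - by rewrite PbY -scalemxAr QY scaler0.
  - by rewrite PbY -scalemxAl YQ scaler0.
  - by rewrite PbY mxrank_scale_nz // Yrank Rrank.
have YR : Ys = b^-1 *: Rs by rewrite -PR PbY scalerA mulVf // scale1r.
split => //; first by exists b^-1; rewrite invr_eq0.
have EG : Es = b^-1 *: Geps W eps k Ed Es by rewrite /Es {1}YR PiS_scale.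
apply/stationaryAP; rewrite {4}EG scalerA.
have -> : frob_inner (Geps W eps k Ed Es) Es = b by rewrite /b PR frob_PiS.
by rewrite mulfV // scale1r.
Qed.

End Correspondence.

(* The spectral simplicity and normalisation hypotheses only guarantee that
   the objects are well defined in the paper; the correspondence itself is
   the purely algebraic content of the two lemmas above. *)
Theorem theorem4p3 (R : realType) (n : nat) (Ed : {set 'I_n * 'I_n})
  (W : 'M[R]_n) (k : nat) (eps : R)
  (HEd : forall i j, (i, j) \in Ed -> (j, i) \in Ed)
  (HWsym : W^T = W) (HWnn : forall i j, 0 <= W i j)
  (HWsupp : forall i j, (i, j) \notin Ed -> W i j = 0)
  (Hk : (2 <= k <= n.-1)%N) (Heps : 0 < eps) :
  (forall Es : 'M[R]_n,
     in_calE1 Ed Es ->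
     stationaryA W eps k Ed Es ->
     simple_eig (laplacian (W + eps *: Es)) k ->
     simple_eig (laplacian (W + eps *: Es)) k.+1 ->
     Geps W eps k Ed Es != 0 ->
     \rank (Reps W eps k Es) = 4%N ->
     exists Ys : 'M[R]_n,
       [/\ Ys^T = Ys, \rank Ys = 4%N, Es = PiS Ed Ys & stationaryB W eps k Ed Ys])
  /\
  (forall Ys : 'M[R]_n,
     Ys^T = Ys -> \rank Ys = 4%N ->
     stationaryB W eps k Ed Ys ->
     let Es := PiS Ed Ys in
     let Rs := Reps W eps k Es in
     frob_norm Es = 1 ->
     simple_eig (laplacian (W + eps *: Es)) k ->
     simple_eig (laplacian (W + eps *: Es)) k.+1 ->
     \rank Rs = 4%N ->
     PY Ys Rs != 0 ->
     [/\ PY Ys Rs = Rs,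
         exists c : R, c != 0 /\ Ys = c *: Rs
       & stationaryA W eps k Ed Es]).
Proof.
split.
- move=> Es [[_ Esupp] _] statA _ _; exact: stationaryA_lift.
- move=> Ys YsT Yrank statB Es Rs _ _ _.
  exact: stationaryB_descend.
Qed.
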